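(* Suppose there exist vectors $\mathbf{v}_{1},\dots,\mathbf{v}_{N}\in\mathbb{C}^{2N}$ such that, with $\mathbf{u}_{n}=\bm{\Gamma}\mathbf{v}_{n}^{*}$: (a) the $2N$ vectors $\mathbf{v}_{1},\dots,\mathbf{v}_{N},\mathbf{u}_{1},\dots,\mathbf{u}_{N}$ are eigenvectors of $\mathbf{D}$ and are mutually $\mathbf{R}$-orthogonal (any two distinct ones have $\mathbf{R}$-inner product $0$); (b) $\langle\mathbf{v}_{n},\mathbf{v}_{n}\rangle=1$ for each $n$; (c) the eigenvalue $\mu_{n}$ of $\mathbf{D}$ associated with $\mathbf{v}_{n}$ is positive for each $n$. Then there exists a normal mode transformation $\mathbf{T}$ whose numbers $\mu_{1},\dots,\mu_{N}$ are the eigenvalues of $\mathbf{D}$ associated with $\mathbf{v}_{1},\dots,\mathbf{v}_{N}$.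
   Context: Fix an integer $N\ge 1$, real numbers $v$ with $|v|<1$, $L>0$, $L_{\star}\ge 0$, an integer $M\ge 1$ and real coefficients $c_{1}=1,c_{2},\dots,c_{M}$. Let $F(k)=\sum_{i=1}^{M}(-1)^{i-1}c_{i}L_{\star}^{2i-2}k^{2i-1}$ and $k_{n}=n\pi/L$, and assume $F(k_{n})^{2}\neq v^{2}k_{n}^{2}$ for $n=1,\dots,N$. Put $u_{n}=\sqrt{|F(k_{n})^{2}-v^{2}k_{n}^{2}|}/k_{n}>0$, and $\varepsilon_{n}=1$ if $F(k_{n})^{2}-v^{2}k_{n}^{2}>0$, $\varepsilon_{n}=0$ otherwise. Define $N\times N$ matrices $\bm\sigma,\bm\rho,\bm\xi$ by $\sigma_{nn}=0$, $\sigma_{nm}=\dfrac{2iv\sqrt{nm}\,[1-(-1)^{n+m}]}{\pi\sqrt{u_{n}u_{m}}\,(m^{2}-n^{2})}$ for $n\neq m$, $\bm\rho=\mathrm{diag}(n u_{n}\varepsilon_{n})$, $\bm\xi=\mathrm{diag}(-n u_{n}(1-\varepsilon_{n}))$. With $\mathbf{I}$ the $N\times N$ identity, define the $2N\times 2N$ matrices $\bm{\Sigma}=\begin{pmatrix}\mathbf{I}&\mathbf{0}\\ \mathbf{0}&-\mathbf{I}\end{pmatrix}$, $\bm{\Gamma}=\begin{pmatrix}\mathbf{0}&\mathbf{I}\\ \mathbf{I}&\mathbf{0}\end{pmatrix}$, $\mathbf{R}=\bm{\Sigma}-\begin{pmatrix}\bm\sigma&\bm\sigma\\ \bm\sigma&\bm\sigma\end{pmatrix}$,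 $\bm{\Omega}=\begin{pmatrix}\bm\rho&\bm\xi\\ \bm\xi&\bm\rho\end{pmatrix}$. Standing assumption: $\mathbf{R}$ is invertible. Let $\mathbf{D}=\mathbf{R}^{-1}\bm{\Omega}$. Here ${}^{*}$ denotes entrywise complex conjugation, ${}^{\mathrm{H}}$ the conjugate transpose, and the $\mathbf{R}$-inner product is $\langle\mathbf{x},\mathbf{y}\rangle=\mathbf{x}^{\mathrm{H}}\mathbf{R}\mathbf{y}$. A normal mode transformation is a $2N\times2N$ matrix $\mathbf{T}$ such that (i) $\mathbf{T}^{\mathrm{H}}\mathbf{R}\mathbf{T}=\bm{\Sigma}$; (ii) $\mathbf{T}=\bm{\Gamma}\mathbf{T}^{*}\bm{\Gamma}$; (iii) $\mathbf{T}^{-1}\mathbf{D}\mathbf{T}=\mathrm{diag}(\mu_{1},\dots,\mu_{N},-\mu_{1},\dots,-\mu_{N})$ for some real numbers $\mu_{n}>0$, where $\mathbf{T}^{-1}=\bm{\Sigma}\mathbf{T}^{\mathrm{H}}\mathbf{R}$. *)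

From mathcomp Require Import all_boot all_algebra.
From mathcomp Require Import all_classical all_reals trigo.
From mathcomp Require Export complex.
Set Implicit Arguments. Unset Strict Implicit. Unset Printing Implicit Defensive.
Import GRing.Theory Num.Theory.
Local Open Scope ring_scope.
Local Open Scope complex_scope.

Section Defs.
Variable R : realType.
Variables (v L Ls : R) (M : nat) (c : nat -> R) (N : nat).

(* F(k) = sum_{i=1}^M (-1)^(i-1) c_i Ls^(2i-2) k^(2i-1); c indexed from 1 *)
Definition Fk (k : R) : R :=
  \sum_(i < M) (-1) ^+ i * c i.+1 * Ls ^+ (2 * i) * k ^+ (2 * i + 1).

Definition kn (n : nat) : R := n%:R * pi / L.

Definition disc (n : nat) : R := Fk (kn n) ^+ 2 - v ^+ 2 * kn n ^+ 2.

Definition un (n : nat) : R := Num.sqrt `|disc n| / kn n.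

Definition epsn (n : nat) : R := if 0 < disc n then 1 else 0.

(* N x N matrices, row/column index i : 'I_N stands for n = i+1 *)
Definition sigma_mx : 'M[R[i]]_N :=
  \matrix_(i, j)
    if i == j then 0
    else 'i * ((2 * v * Num.sqrt ((i.+1 * j.+1)%:R) * (1 - (-1) ^+ (i.+1 + j.+1)))
               / (pi * Num.sqrt (un i.+1 * un j.+1)
                     * ((j.+1 ^ 2)%:R - (i.+1 ^ 2)%:R)))%:C.

Definition rho_mx : 'M[R[i]]_N :=
  diag_mx (\row_(i < N) (i.+1%:R * un i.+1 * epsn i.+1)%:C).

Definition xi_mx : 'M[R[i]]_N :=
  diag_mx (\row_(i < N) (- (i.+1%:R * un i.+1 * (1 - epsn i.+1)))%:C).

Definition Sigma_mx : 'M[R[i]]_(N + N) := block_mx 1%:M 0 0 (- 1%:M).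
Definition Gamma_mx : 'M[R[i]]_(N + N) := block_mx 0 1%:M 1%:M 0.
Definition R_mx : 'M[R[i]]_(N + N) :=
  Sigma_mx - block_mx sigma_mx sigma_mx sigma_mx sigma_mx.
Definition Omega_mx : 'M[R[i]]_(N + N) := block_mx rho_mx xi_mx xi_mx rho_mx.
Definition D_mx : 'M[R[i]]_(N + N) := invmx R_mx *m Omega_mx.

End Defs.

Definition cconj (R : realType) (m n : nat) (A : 'M[R[i]]_(m, n)) : 'M[R[i]]_(m, n) :=
  map_mx conjc A.
Definition ctrans (R : realType) (m n : nat) (A : 'M[R[i]]_(m, n)) : 'M[R[i]]_(n, m) :=
  (cconj A)^T.

Definition Rinner (R : realType) (n : nat) (Rm : 'M[R[i]]_n) (x y : 'cV[R[i]]_n) : R[i] :=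
  (ctrans x *m Rm *m y) 0 0.

Definition normal_mode_transformation (R : realType) (N : nat)
    (Rm Dm : 'M[R[i]]_(N + N)) (T : 'M[R[i]]_(N + N)) (mu : 'I_N -> R) : Prop :=
  [/\ ctrans T *m Rm *m T = Sigma_mx R N,
      T = Gamma_mx R N *m cconj T *m Gamma_mx R N,
      (Sigma_mx R N *m ctrans T *m Rm) *m Dm *m T
        = diag_mx (row_mx (\row_(n < N) (mu n)%:C) (\row_(n < N) (- mu n)%:C))
    & forall n, 0 < mu n].

From mathcomp Require Import all_boot all_algebra.
From mathcomp Require Import all_classical all_reals trigo.
From mathcomp Require Import complex.
Import GRing.Theory Num.Theory.
Local Open Scope ring_scope.
Local Open Scope complex_scope.

(* The map x |-> Gamma x^* intertwines the problem with its negative: sigma is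
   purely imaginary while rho and xi are real, so Gamma R Gamma = - R^* and
   Gamma D Gamma = - D^*.  Hence u_n = Gamma v_n^* is an eigenvector of D for
   - mu_n with <u_n, u_n> = - <v_n, v_n>^* = -1.  The matrix T with columns
   v_1, ..., v_N, u_1, ..., u_N then satisfies T^H R T = Sigma by the
   orthogonality hypotheses, T = Gamma T^* Gamma by construction, and
   D T = T diag(mu, -mu), so that Sigma T^H R D T = diag(mu, -mu). *)

Section Conjugation.
Variable R : realType.
Implicit Types m n p : nat.

Lemma cconjK m n : involutive (@cconj R m n).
Proof. by move=> A; apply/matrixP => a b; rewrite !mxE conjcK. Qed.

Lemma cconjM m n p (A : 'M[R[i]]_(m, n)) (B : 'M[R[i]]_(n, p)) :
  cconj (A *m B) = cconj A *m cconj B.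
Proof. exact: map_mxM. Qed.

Lemma cconjZ_real m n (a : R) (A : 'M[R[i]]_(m, n)) :
  cconj (a%:C *: A) = a%:C *: cconj A.
Proof. by rewrite /cconj map_mxZ; congr (_ *: _); exact: conjc_real. Qed.

Lemma ctransM m n p (A : 'M[R[i]]_(m, n)) (B : 'M[R[i]]_(n, p)) :
  ctrans (A *m B) = ctrans B *m ctrans A.
Proof. by rewrite /ctrans cconjM trmx_mul. Qed.

Lemma cconj_ctrans m n (A : 'M[R[i]]_(m, n)) : cconj (ctrans A) = ctrans (cconj A).
Proof. by apply/matrixP => a b; rewrite !mxE. Qed.

Lemma Rinner_mulmx m n (A : 'M[R[i]]_(m, n)) (Rm : 'M[R[i]]_m) x y :
  Rinner Rm (A *m x) (A *m y) = Rinner (ctrans A *m Rm *m A) x y.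
Proof. by rewrite /Rinner ctransM !mulmxA. Qed.

Lemma RinnerN n (Rm : 'M[R[i]]_n) x y : Rinner (- Rm) x y = - Rinner Rm x y.
Proof. by rewrite /Rinner mulmxN mulNmx mxE. Qed.

Lemma conjc_Rinner n (Rm : 'M[R[i]]_n) x y :
  (Rinner Rm x y)^* = Rinner (cconj Rm) (cconj x) (cconj y).
Proof.
transitivity (cconj (ctrans x *m Rm *m y) 0 0); first by rewrite mxE.
by rewrite !cconjM cconj_ctrans.
Qed.

Lemma ctrans_mulmx_entry m n (Rm : 'M[R[i]]_m) (A B : 'M[R[i]]_(m, n)) a b :
  (ctrans A *m Rm *m B) a b = Rinner Rm (col a A) (col b B).
Proof.
rewrite /Rinner !mxE; apply: eq_bigr => j _; rewrite !mxE; congr (_ * _).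
by apply: eq_bigr => k _; rewrite !mxE.
Qed.

End Conjugation.

Lemma mulmx_diag_cols (T : comPzRingType) m n
    (A : 'M[T]_m) (B : 'M[T]_(m, n)) (d : 'rV[T]_n) :
  (forall k, A *m col k B = d 0 k *: col k B) -> A *m B = B *m diag_mx d.
Proof.
move=> eigen_col; apply/matrixP => a k; rewrite mul_mx_diag mxE mulrC.
have := eigen_col k; rewrite {1}colE mulmxA -colE => /colP/(_ a).
by rewrite !mxE.
Qed.

Section BlockSymmetries.
Variables (R : realType) (N : nat).
Local Notation Gamma := (Gamma_mx R N).
Local Notation Sigma := (Sigma_mx R N).

Lemma Gamma_mxK : Gamma *m Gamma = 1%:M.
Proof.
by rewrite /Gamma_mx mulmx_block !mulmx0 !mul0mx !mulmx1 !addr0 !add0r -scalar_mx_block.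
Qed.

Lemma Sigma_mxK : Sigma *m Sigma = 1%:M.
Proof.
rewrite /Sigma_mx mulmx_block !mulmx0 !mul0mx mulmx1 mulmxN mulmx1 opprK.
by rewrite !addr0 !add0r -scalar_mx_block.
Qed.

Lemma cconj_Gamma : cconj Gamma = Gamma.
Proof. by rewrite /cconj /Gamma_mx map_block_mx map_mx1 !map_mx0. Qed.

Lemma cconj_Sigma : cconj Sigma = Sigma.
Proof. by rewrite /cconj /Sigma_mx map_block_mx map_mxN map_mx1 !map_mx0. Qed.

Lemma ctrans_Gamma : ctrans Gamma = Gamma.
Proof. by rewrite /ctrans cconj_Gamma /Gamma_mx tr_block_mx !trmx1 !trmx0. Qed.

Lemma Gamma_block_Gamma (A B C D : 'M[R[i]]_N) :
  Gamma *m block_mx A B C D *m Gamma = block_mx D C B A.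
Proof.
by rewrite /Gamma_mx !mulmx_block !mulmx0 !mul0mx !mulmx1 !mul1mx !addr0 !add0r.
Qed.

Lemma row_mx_Gamma m (A B : 'M[R[i]]_(m, N)) : row_mx A B *m Gamma = row_mx B A.
Proof. by rewrite /Gamma_mx mul_row_block !mulmx0 !mulmx1 addr0 add0r. Qed.

Lemma Sigma_mx_diag : Sigma = diag_mx (row_mx (const_mx 1) (const_mx (-1))).
Proof. by rewrite diag_mx_row !diag_const_mx raddfN. Qed.

End BlockSymmetries.

Section ModeMatrix.
Context {R : realType} {N : nat}.
Local Notation Gamma := (Gamma_mx R N).
Variable w : 'I_N -> 'cV[R[i]]_(N + N).

Definition mode_vector (k : 'I_(N + N)) : 'cV[R[i]]_(N + N) :=
  match fintype.split k with inl n => w n | inr n => Gamma *m cconj (w n) end.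

Definition mode_matrix : 'M[R[i]]_(N + N) :=
  let X := \matrix_(a, n) w n a 0 in row_mx X (Gamma *m cconj X).

Lemma col_mode_matrix k : col k mode_matrix = mode_vector k.
Proof.
have colX n : col n (\matrix_(a, n) w n a 0) = w n.
  by apply/matrixP => a b; rewrite !mxE (ord1 b).
rewrite /mode_matrix /mode_vector; case: split_ordP => n ->; first by rewrite colKl.
by rewrite colKr colE -mulmxA -colE /cconj -map_col colX.
Qed.

Lemma Gamma_cconj_mode_matrix : Gamma *m cconj mode_matrix *m Gamma = mode_matrix.
Proof.
rewrite /mode_matrix /cconj map_row_mx -!/(cconj _) cconjM cconjK cconj_Gamma.
by rewrite mul_mx_row mulmxA Gamma_mxK mul1mx row_mx_Gamma.
Qed.

Variables Rm Dm : 'M[R[i]]_(N + N).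
Hypothesis Gamma_Rm_Gamma : Gamma *m Rm *m Gamma = - cconj Rm.
Hypothesis Gamma_Dm_Gamma : Gamma *m Dm *m Gamma = - cconj Dm.

Lemma Rinner_Gamma_cconj x :
  Rinner Rm (Gamma *m cconj x) (Gamma *m cconj x) = - (Rinner Rm x x)^*.
Proof. by rewrite Rinner_mulmx ctrans_Gamma Gamma_Rm_Gamma RinnerN -conjc_Rinner. Qed.

Lemma eigen_Gamma_cconj (x : 'cV[R[i]]_(N + N)) (mu : R) :
  Dm *m x = mu%:C *: x -> Dm *m (Gamma *m cconj x) = (- mu)%:C *: (Gamma *m cconj x).
Proof.
move=> Dx; rewrite mulmxA; have -> : Dm *m Gamma = Gamma *m (Gamma *m Dm *m Gamma).
  by rewrite !mulmxA Gamma_mxK mul1mx.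
rewrite Gamma_Dm_Gamma mulmxN mulNmx -mulmxA -cconjM Dx cconjZ_real -scalemxAr.
by rewrite -scaleNr rmorphN.
Qed.

Lemma mulmx_mode_matrix (mu : 'I_N -> R) :
  (forall n, Dm *m w n = (mu n)%:C *: w n) ->
  Dm *m mode_matrix
    = mode_matrix *m diag_mx (row_mx (\row_n (mu n)%:C) (\row_n (- mu n)%:C)).
Proof.
move=> Dw; apply: mulmx_diag_cols => k; rewrite col_mode_matrix /mode_vector.
case: split_ordP => n ->; rewrite ?row_mxEl ?row_mxEr mxE; first exact: Dw.
exact: eigen_Gamma_cconj.
Qed.

Lemma mode_matrix_Gram :
  (forall k l, k != l -> Rinner Rm (mode_vector k) (mode_vector l) = 0) ->
  (forall n, Rinner Rm (w n) (w n) = 1) ->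
  ctrans mode_matrix *m Rm *m mode_matrix = Sigma_mx R N.
Proof.
move=> orth normed; apply/matrixP => a b.
rewrite ctrans_mulmx_entry !col_mode_matrix Sigma_mx_diag mxE.
have [<-|ab] := eqVneq a b; last by rewrite orth // mulr0n.
rewrite mulr1n /mode_vector; case: split_ordP => n ->.
  by rewrite row_mxEl mxE normed.
by rewrite row_mxEr mxE Rinner_Gamma_cconj normed rmorph1.
Qed.

Lemma normal_mode_transformation_mode_matrix (mu : 'I_N -> R) :
  (forall k l, k != l -> Rinner Rm (mode_vector k) (mode_vector l) = 0) ->
  (forall n, Rinner Rm (w n) (w n) = 1) ->
  (forall n, Dm *m w n = (mu n)%:C *: w n /\ 0 < mu n) ->
  normal_mode_transformation Rm Dm mode_matrix mu.
Proof.
move=> orth normed eigen; have Gram := mode_matrix_Gram orth normed.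
split=> [||| n]; last exact: (eigen n).2.
- exact: Gram.
- by rewrite Gamma_cconj_mode_matrix.
- rewrite -mulmxA (mulmx_mode_matrix _ (fun n => (eigen n).1)) !mulmxA.
  by rewrite -2!(mulmxA (Sigma_mx R N)) Gram Sigma_mxK mul1mx.
Qed.

End ModeMatrix.

Lemma cconj_diag_real (R : realType) n (d : 'I_n -> R) :
  cconj (diag_mx (\row_k (d k)%:C)) = diag_mx (\row_k (d k)%:C).
Proof.
by apply/matrixP => a b; rewrite !mxE rmorphMn; congr (_ *+ _); exact: conjc_real.
Qed.

Section Hamiltonian.
Variables (R : realType) (v L Ls : R) (M : nat) (c : nat -> R) (N : nat).
Local Notation Gamma := (Gamma_mx R N).
Local Notation sigma := (sigma_mx v L Ls M c N).
Local Notation Omega := (Omega_mx v L Ls M c N).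
Local Notation Rm := (R_mx v L Ls M c N).
Local Notation Dm := (D_mx v L Ls M c N).

Lemma cconj_sigma_mx : cconj sigma = - sigma.
Proof.
apply/matrixP => a b; rewrite !mxE; case: eqP => _; first by rewrite conjc0 oppr0.
rewrite rmorphM -mulNr; congr (_ * _); last exact: conjc_real.
by apply/eqP; rewrite eq_complex /= oppr0 !eqxx.
Qed.

Lemma cconj_Omega_mx : cconj Omega = Omega.
Proof. by rewrite /cconj /Omega_mx map_block_mx -!/(cconj _) !cconj_diag_real. Qed.

Lemma Gamma_Omega_Gamma : Gamma *m Omega *m Gamma = Omega.
Proof. exact: Gamma_block_Gamma. Qed.

Lemma Gamma_R_Gamma : Gamma *m Rm *m Gamma = - cconj Rm.
Proof.
rewrite /R_mx /cconj map_mxB -!/(cconj _) cconj_Sigma /cconj map_block_mx -!/(cconj _).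
rewrite cconj_sigma_mx mulmxBr mulmxBl !(Gamma_block_Gamma R N) /Sigma_mx.
by rewrite !opp_block_mx !add_block_mx opp_block_mx !opprK !opprD !opprK !oppr0.
Qed.

Lemma Gamma_D_Gamma : Rm \in unitmx -> Gamma *m Dm *m Gamma = - cconj Dm.
Proof.
move=> Rm_unit; have RD : Rm *m Dm = Omega by rewrite /D_mx mulKVmx.
have cRm_unit : cconj Rm \in unitmx by rewrite map_unitmx.
apply: (can_inj (mulKmx cRm_unit)).
rewrite mulmxN -cconjM RD cconj_Omega_mx -[cconj Rm]opprK -Gamma_R_Gamma mulNmx.
have -> : Gamma *m Rm *m Gamma *m (Gamma *m Dm *m Gamma) = Gamma *m (Rm *m Dm) *m Gamma.
  by rewrite !mulmxA -(mulmxA _ Gamma Gamma) Gamma_mxK mulmx1.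
by rewrite RD Gamma_Omega_Gamma.
Qed.

End Hamiltonian.

Theorem lemma3 (R : realType) (N : nat) (v L Ls : R) (M : nat) (c : nat -> R) :
  (0 < N)%N -> `|v| < 1 -> 0 < L -> 0 <= Ls -> (0 < M)%N -> c 1%N = 1 ->
  (forall n : 'I_N, disc v L Ls M c n.+1 != 0) ->
  R_mx v L Ls M c N \in unitmx ->
  forall (w : 'I_N -> 'cV[R[i]]_(N + N)) (mu : 'I_N -> R),
  let Rm := R_mx v L Ls M c N in
  let Dm := D_mx v L Ls M c N in
  let u := fun n => Gamma_mx R N *m cconj (w n) in
  let W := fun k : 'I_(N + N) =>
             match fintype.split k with inl n => w n | inr n => u n end in
  (forall k, W k != 0 /\ exists lam : R[i], Dm *m W k = lam *: W k) ->
  (forall k l, k != l -> Rinner Rm (W k) (W l) = 0) ->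
  (forall n, Rinner Rm (w n) (w n) = 1) ->
  (forall n, Dm *m w n = (mu n)%:C *: w n /\ 0 < mu n) ->
  exists T : 'M[R[i]]_(N + N), normal_mode_transformation Rm Dm T mu.
Proof.
move=> _ _ _ _ _ _ _ Rm_unit w mu Rm Dm u W _ orth normed eigen.
exists (mode_matrix w).
apply: (@normal_mode_transformation_mode_matrix R N w Rm Dm _ _ mu orth normed eigen).
- exact: Gamma_R_Gamma.
- exact: Gamma_D_Gamma.
Qed.
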